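(* For every $\beta>0$ there is $\gamma=\gamma(\beta)>0$ and $n_0$ such that the following holds for all $n\ge n_0$. Let $G$ be an $n$-vertex graph such that for every partition $V(G)=X\cup Y$ with $|X|=\lfloor n/2\rfloor$ it holds that $\left|e(X,Y)-\frac12|X||Y|\right|\le\gamma n^2$. Then $G$ is host-$\beta$-good.
   Context: $e(X,Y)$ is the number of edges of $G$ between $X$ and $Y$. For a vertex $x$ and set $S$, $N_S(x)$ is the set of neighbors of $x$ in $S$ and $d_S(x)=|N_S(x)|$. An $n$-vertex graph $G$ is host-$\beta$-good if there is a partition $V(G)=X\cup Y$ with $|X|=\lfloor n/2\rfloor$ and distinct vertices $x_1,x_1',\dots,x_m,x_m'\in X$ with $m=0.05n$, such that for every $1\le i\le m$: (1) $|d_Y(x_i)-d_Y(x_i')|\le\beta n$; (2) $0.02|Y|\le|N_Y(x_i)\triangle N_Y(x_i')|\le0.98|Y|$; (3) $0.1|Y|\le d_Y(x_i),d_Y(x_i')\le0.9|Y|$. *)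

From mathcomp Require Import all_boot all_order all_algebra.
From mathcomp Require Import reals.
Set Implicit Arguments. Unset Strict Implicit. Unset Printing Implicit Defensive.
Import Order.TTheory GRing.Theory Num.Theory.
Local Open Scope ring_scope.

(* A (simple) graph on vertex set 'I_n is a symmetric irreflexive relation e. *)

(* e(X,Y): number of ordered pairs (x,y) with x in X, y in Y, xy an edge.
   For disjoint X, Y this is the number of edges between X and Y. *)
Definition e_between (n : nat) (e : rel 'I_n) (X Y : {set 'I_n}) : nat :=
  #|[set p : 'I_n * 'I_n | (p.1 \in X) && (p.2 \in Y) && e p.1 p.2]|.

Definition nbhd_in (n : nat) (e : rel 'I_n) (S : {set 'I_n}) (x : 'I_n) : {set 'I_n} :=
  [set y in S | e x y].

Definition deg_in (n : nat) (e : rel 'I_n) (S : {set 'I_n}) (x : 'I_n) : nat :=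
  #|nbhd_in e S x|.

Definition symdiff (T : finType) (A B : {set T}) : {set T} := (A :\: B) :|: (B :\: A).

(* m = 0.05 n, read as the ceiling  m = ceil(n/20). *)
Definition m_of (n : nat) : nat := (n + 19) %/ 20.

(* Conditions (1)-(3) of host-beta-goodness for one pair (a, a') of X with Y the other side. *)
Definition good_pair (R : realType) (beta : R) (n : nat) (e : rel 'I_n)
  (Y : {set 'I_n}) (a a' : 'I_n) : Prop :=
  let dY := (fun v => (deg_in e Y v)%:R : R) in
  let D := (#|symdiff (nbhd_in e Y a) (nbhd_in e Y a')|%:R : R) in
  let y := (#|Y|%:R : R) in
  [/\ `|dY a - dY a'| <= beta * n%:R,
      (1/50) * y <= D /\ D <= (49/50) * y,
      (1/10) * y <= dY a /\ dY a <= (9/10) * y &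
      (1/10) * y <= dY a' /\ dY a' <= (9/10) * y].

Definition host_good (R : realType) (beta : R) (n : nat) (e : rel 'I_n) : Prop :=
  exists (X : {set 'I_n}) (x x' : 'I_(m_of n) -> 'I_n),
    [/\ #|X| = n./2,
        [/\ injective x, injective x' & forall i j, x i != x' j],
        (forall i, x i \in X /\ x' i \in X) &
        forall i, good_pair beta e (~: X) (x i) (x' i)].

(* Fix X with |X| = n/2 and let Y be its complement.  Exchanging small blocks between the
   two sides changes e(X, Y) by twice an alternating sum of edge counts, so the cut
   hypothesis bounds every such sum by O(gamma n^2).  Hence for disjoint p-sets P, Q a large
   degree gap e(P, A) - e(Q, A) on one t-set A spreads, by averaging over t-blocks, to every
   other set, and two pairs (P1, Q1), (P2, Q2) with large gaps cannot coexist: applied to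
   each other they would force e(P1, P2) - e(Q2, Q1) > p^2.  Consequently few vertices of X
   have degree into Y above 0.9|Y| or below 0.1|Y|.  The others are sorted into about
   1/beta buckets of nearly equal degree; in a large bucket two vertices have neighbourhoods
   in Y that are neither almost equal nor almost complementary, since otherwise t vertices
   would see almost the same set N of Y, giving large gaps between subsets of N and of
   Y \ N.  Such pairs are extracted greedily. *)

From mathcomp Require Import all_boot all_order all_algebra.
From mathcomp Require Import reals.
From mathcomp Require Import ring lra zify.
Import Order.TTheory GRing.Theory Num.Theory.

Set Implicit Arguments.
Unset Strict Implicit.
Unset Printing Implicit Defensive.

Local Open Scope ring_scope.

(** * Finite sets and averaging *)

Section FinsetCounting.
Variable T : finType.
Implicit Types A S U : {set T}.

Lemma exists_subset_card S j : (j <= #|S|)%N -> exists2 A : {set T}, A \subset S & #|A| = j.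
Proof.
elim: j => [|j IH] hj; first by exists set0; [exact: sub0set | exact: cards0].
have [A sAS cA] := IH (ltnW hj).
have /card_gt0P[x] : (0 < #|S :\: A|)%N by rewrite cardsDS // cA subn_gt0.
rewrite inE => /andP[xA xS].
by exists (x |: A); rewrite ?subUset ?sub1set ?xS ?cardsU1 ?xA ?cA.
Qed.

Lemma exists_disjoint_subsets S p : (2 * p <= #|S|)%N ->
  exists A B : {set T}, [/\ A \subset S, B \subset S, #|A| = p, #|B| = p & [disjoint A & B]].
Proof.
move=> hS; have [A sAS cA] := exists_subset_card (leq_trans (leq_pmull p (isT : (0 < 2)%N)) hS).
have [|B sB cB] := @exists_subset_card (S :\: A) p; first by rewrite cardsDS // cA; lia.
exists A, B; split => //; first exact: subset_trans sB (subsetDl S A).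
by rewrite disjoint_sym disjoints_subset (subset_trans sB) // subDset setUCr subsetT.
Qed.

Lemma pigeonhole_fiber (b c : nat) (f : T -> 'I_b.+1) U :
  (c * b.+1 <= #|U|)%N -> exists j, (c <= #|[set x in U | f x == j]|)%N.
Proof.
move=> hU; apply/existsP; apply: contraLR hU => /existsPn small; rewrite -ltnNge.
have c_gt0 : (0 < c)%N by case: c small => // /(_ ord0).
have -> : #|U| = (\sum_j #|[set x in U | f x == j]|)%N.
  rewrite -sum1_card (partition_big f predT) //=; apply: eq_bigr => j _.
  by rewrite -sum1_card; apply: eq_bigl => x; rewrite inE.
apply: (@leq_ltn_trans (\sum_(j < b.+1) c.-1)).
  by apply: leq_sum => j _; have := small j; rewrite -ltnNge; lia.
by rewrite sum_nat_const card_ord; nia.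
Qed.

Lemma card_symdiff_setDl (Y N M : {set T}) : N \subset Y -> M \subset Y ->
  #|symdiff (Y :\: N) M| = (#|Y| - #|symdiff N M|)%N.
Proof.
move=> sNY sMY.
have memY x : ((x \in N) ==> (x \in Y)) && ((x \in M) ==> (x \in Y)).
  by apply/andP; split; apply/implyP; [apply: (subsetP sNY) | apply: (subsetP sMY)].
rewrite -cardsDS; last by apply/subsetP => x; move: (memY x); rewrite /symdiff !inE;
  case: (x \in N); case: (x \in M); case: (x \in Y).
apply: eq_card => x; move: (memY x); rewrite /symdiff !inE.
by case: (x \in N); case: (x \in M); case: (x \in Y).
Qed.

Definition extend_last m (f : 'I_m -> T) (z : T) (i : 'I_m.+1) : T :=
  if unlift ord_max i is Some j then f j else z.

Lemma extend_last_inj m (f : 'I_m -> T) z :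
  injective f -> (forall i, f i != z) -> injective (extend_last f z).
Proof.
move=> injf fz i j; rewrite /extend_last.
case: unliftP => [i' ->|->]; case: unliftP => [j' ->|->] //.
- by move/injf ->.
- by move/eqP; rewrite (negbTE (fz i')).
- by move/esym/eqP; rewrite (negbTE (fz j')).
Qed.

Lemma extend_last_neq m (f g : 'I_m -> T) z z' :
  (forall i j, f i != g j) -> (forall i, f i != z') -> (forall j, z != g j) -> z != z' ->
  forall i j, extend_last f z i != extend_last g z' j.
Proof.
move=> fg fz' zg zz' i j; rewrite /extend_last.
by case: unliftP => [i' _|_]; case: unliftP => [j' _|_]; rewrite ?fg ?fz' ?zg.
Qed.

Lemma greedy_pairs (K : {set T}) (P : T -> T -> Prop) (L m : nat) :
  (forall U, U \subset K -> (L <= #|U|)%N ->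
     exists a a', [/\ a \in U, a' \in U, a != a' & P a a']) ->
  (L + 2 * m <= #|K|)%N ->
  exists x x' : 'I_m -> T,
    [/\ [/\ injective x, injective x' & forall i j, x i != x' j],
        (forall i, x i \in K /\ x' i \in K) & forall i, P (x i) (x' i)].
Proof.
move=> hfind; elim: m => [|m IH] hK.
  have [a _] := hfind K (subxx K) (leq_trans (leq_addr _ _) hK).
  by exists (fun=> a), (fun=> a); split; [split | |]; case.
have [|x [x' [[injx injx' xx'] xK Px]]] := IH; first lia.
set S := x @: setT :|: x' @: setT.
have cS : (#|S| <= 2 * m)%N.
  have := (leq_card_setU (x @: setT) (x' @: setT)).1.
  have := leq_imset_card x setT; have := leq_imset_card x' setT.
  by rewrite /S cardsT card_ord; lia.
have [|a [a' [aKS a'KS aa' Paa']]] := hfind (K :\: S) (subsetDl K S).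
  by rewrite cardsD; have := subset_leq_card (subsetIr K S); lia.
have notS z i : z \in K :\: S -> x i != z /\ x' i != z.
  by rewrite !inE => /andP[zS _]; split; apply: contraNneq zS => <-;
    rewrite imset_f ?orbT ?inE.
exists (extend_last x a), (extend_last x' a'); split; first split.
- by apply: extend_last_inj injx _ => i; case: (notS a i aKS).
- by apply: extend_last_inj injx' _ => i; case: (notS a' i a'KS).
- apply: extend_last_neq => // [i|j]; first by case: (notS a' i a'KS).
  by case: (notS a j aKS) => _; rewrite eq_sym.
- move: aKS a'KS; rewrite !inE => /andP[_ aK] /andP[_ a'K] i; rewrite /extend_last.
  by case: unliftP => [j _|_]; [exact: xK | split].
- by move=> i; rewrite /extend_last; case: unliftP => [j _|_]; [exact: Px | exact: Paa'].
Qed.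

End FinsetCounting.

Lemma sumr_const_mul (R : pzSemiRingType) (T : finType) (W : {set T}) (c : R) :
  c * #|W|%:R = \sum_(w in W) c.
Proof. by rewrite sumr_const mulr_natr. Qed.

Lemma sum_ge_const (R : numDomainType) (T : finType) (W : {set T}) (f : T -> R) (c : R) :
  {in W, forall w, c <= f w} -> c * #|W|%:R <= \sum_(w in W) f w.
Proof. by move=> hf; rewrite sumr_const_mul; apply: ler_sum => w /hf. Qed.

Lemma sum_le_const (R : numDomainType) (T : finType) (W : {set T}) (f : T -> R) (c : R) :
  {in W, forall w, f w <= c} -> \sum_(w in W) f w <= c * #|W|%:R.
Proof. by move=> hf; rewrite sumr_const_mul; apply: ler_sum => w /hf. Qed.

Lemma big_setD_sub (R : nmodType) (T : finType) (A W : {set T}) (f : T -> R) :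
  A \subset W -> \sum_(w in W) f w = \sum_(w in A) f w + \sum_(w in W :\: A) f w.
Proof. by move=> sAW; rewrite (big_setID A) (setIidPr sAW). Qed.

(* Split [W] into blocks of size [t], leaving fewer than [t] points. *)
Lemma averaging_lb (R : realFieldType) (T : finType) (f : T -> R) (M c : R) (t : nat)
    (W : {set T}) :
  (0 < t)%N -> 0 <= M -> {in W, forall w, - M <= f w} ->
  (forall A : {set T}, A \subset W -> #|A| = t -> c <= \sum_(a in A) f a) ->
  #|W|%:R * c - t%:R * (`|c| + t%:R * M) <= t%:R * \sum_(w in W) f w.
Proof.
move=> t_gt0 M_ge0; have [s] := ubnP #|W|; elim: s W => // s IH W cW hf hA.
have t_ge0 : 0 <= t%:R :> R by [].
have [Wt|tW] := ltnP #|W| t.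
  have hWt : #|W|%:R <= t%:R :> R by rewrite ler_nat ltnW.
  have hc : #|W|%:R * c <= t%:R * `|c|.
    by rewrite (le_trans (ler_norm _)) // normrM ger0_norm // ler_wpM2r.
  have hsum : t%:R * (- M * #|W|%:R) <= t%:R * \sum_(w in W) f w.
    by rewrite ler_wpM2l // sum_ge_const.
  have : M * #|W|%:R <= M * t%:R by rewrite ler_wpM2l.
  nra.
have [A sAW cA] := exists_subset_card tW.
have cWA : #|W :\: A| = (#|W| - t)%N by rewrite cardsDS // cA.
have IHA : #|W :\: A|%:R * c - t%:R * (`|c| + t%:R * M) <= t%:R * \sum_(w in W :\: A) f w.
  apply: IH; first by rewrite cWA; lia.
    by move=> w /setDP[/hf].
  by move=> B sB; apply: hA; apply: subset_trans sB (subsetDl W A).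
have := hA A sAW cA.
rewrite (big_setD_sub f sAW) cWA natrB // in IHA *.
nra.
Qed.

Lemma disjointsU (T : finType) (A B C : {set T}) :
  [disjoint A :|: B & C] = [disjoint A & C] && [disjoint B & C].
Proof. by rewrite !disjoints_subset subUset. Qed.

Lemma disjointsUr (T : finType) (A B C : {set T}) :
  [disjoint C & A :|: B] = [disjoint C & A] && [disjoint C & B].
Proof. by rewrite disjoint_sym disjointsU !(disjoint_sym _ C). Qed.

Lemma card_sum_nat (T : finType) (A : {pred T}) : #|A| = (\sum_x (x \in A))%N.
Proof. by rewrite -sum1_card big_mkcond; apply: eq_bigr => x _; case: (x \in A). Qed.

Lemma big_disjointU (V : nmodType) (T : finType) (A B : {set T}) (F : T -> V) :
  [disjoint A & B] -> \sum_(i in A :|: B) F i = \sum_(i in A) F i + \sum_(i in B) F i.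
Proof. by move=> dAB; rewrite (eq_bigl [predU A & B]) ?bigU // => i; rewrite inE. Qed.

(** * Edge counts and cuts *)

Section EdgeCounts.
Variables (n : nat) (e : rel 'I_n).
Hypothesis esym : symmetric e.
Implicit Types A B S U W Z : {set 'I_n}.

Lemma e_between_pairs A B :
  e_between e A B = (\sum_a \sum_b ((a \in A) && (b \in B) && e a b))%N.
Proof. by rewrite /e_between card_sum_nat pair_bigA; apply: eq_bigr => p _; rewrite inE. Qed.

Lemma deg_in_sum B a : deg_in e B a = (\sum_b ((b \in B) && e a b))%N.
Proof. by rewrite /deg_in /nbhd_in card_sum_nat; apply: eq_bigr => b _; rewrite inE. Qed.

Lemma e_betweenE A B : e_between e A B = (\sum_(a in A) deg_in e B a)%N.
Proof.
rewrite e_between_pairs [RHS]big_mkcond; apply: eq_bigr => a _.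
by rewrite deg_in_sum; case: (a \in A) => //=; rewrite big1.
Qed.

Lemma e_betweenC A B : e_between e A B = e_between e B A.
Proof.
rewrite !e_between_pairs exchange_big; apply: eq_bigr => a _; apply: eq_bigr => b _.
by rewrite esym; case: (a \in B); case: (b \in A).
Qed.

Lemma e_betweenUl A A' B : [disjoint A & A'] ->
  e_between e (A :|: A') B = (e_between e A B + e_between e A' B)%N.
Proof. by move=> dA; rewrite !e_betweenE big_disjointU. Qed.

Lemma e_betweenUr A B B' : [disjoint B & B'] ->
  e_between e A (B :|: B') = (e_between e A B + e_between e A B')%N.
Proof. by move=> dB; rewrite e_betweenC e_betweenUl // !(e_betweenC _ A). Qed.

Lemma deg_in_leq B a : (deg_in e B a <= #|B|)%N.
Proof. by apply: subset_leq_card; apply/subsetP => b; rewrite inE => /andP[]. Qed.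

Lemma e_between_leq A B : (e_between e A B <= #|A| * #|B|)%N.
Proof. by rewrite e_betweenE -sum_nat_const; apply: leq_sum => a _; apply: deg_in_leq. Qed.

Definition cut S := e_between e S (~: S).

Lemma cutU U W : [disjoint U & W] -> (cut (U :|: W) + 2 * e_between e U W = cut U + cut W)%N.
Proof.
move=> dUW; rewrite /cut.
have CU : ~: U = ~: (U :|: W) :|: W.
  by apply/setP => x; rewrite !inE; case: (boolP (x \in W)) => [/(disjointFl dUW)->|];
    rewrite ?orbF ?orbT.
have CW : ~: W = ~: (U :|: W) :|: U.
  by apply/setP => x; rewrite !inE; case: (boolP (x \in U)) => [/(disjointFr dUW)->|];
    rewrite ?orbF.
have dC (V : {set 'I_n}) : V \subset U :|: W -> [disjoint ~: (U :|: W) & V].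
  by move=> sV; rewrite disjoint_sym disjoints_subset setCK.
rewrite CU CW !e_betweenUr ?dC ?subsetUl ?subsetUr // e_betweenUl // (e_betweenC W U).
lia.
Qed.

(* In the alternating sum of the four cuts, the cuts of single blocks and all edges
   towards [Z] cancel. *)
Lemma cut_switch A A' B B' Z :
  [disjoint A :|: A' & B :|: B'] -> [disjoint A :|: A' :|: (B :|: B') & Z] ->
  (cut (A :|: (B :|: Z)) + cut (A' :|: (B' :|: Z))
     + 2 * (e_between e A B + e_between e A' B') =
   cut (A' :|: (B :|: Z)) + cut (A :|: (B' :|: Z))
     + 2 * (e_between e A B' + e_between e A' B))%N.
Proof.
rewrite !disjointsU !disjointsUr => /andP[/andP[dAB dAB'] /andP[dA'B dA'B']].
move=> /andP[/andP[dAZ dA'Z] /andP[dBZ dB'Z]].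
have := @cutU A (B :|: Z); have := @cutU A' (B :|: Z).
have := @cutU A (B' :|: Z); have := @cutU A' (B' :|: Z).
rewrite !disjointsUr !e_betweenUr ?dAB ?dAB' ?dA'B ?dA'B' ?dAZ ?dA'Z ?dBZ ?dB'Z //.
by move=> /(_ isT) h1 /(_ isT) h2 /(_ isT) h3 /(_ isT) h4; lia.
Qed.

End EdgeCounts.

Lemma card_disjointU (T : finType) (A B : {set T}) :
  [disjoint A & B] -> #|A :|: B| = (#|A| + #|B|)%N.
Proof. by move=> dAB; apply/eqP; rewrite (leq_card_setU A B).2. Qed.

(** * Degree gaps when all halving cuts are balanced *)

Section QuasirandomCuts.
Variables (R : realType) (n : nat) (e : rel 'I_n) (k : nat) (c0 g : R).
Hypothesis esym : symmetric e.
Hypothesis hcut : forall X : {set 'I_n}, #|X| = k -> `|(cut e X)%:R - c0| <= g.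
Implicit Types A B P Q S W Y Z : {set 'I_n}.

Lemma cut_dev_ge0 : (k <= n)%N -> 0 <= g.
Proof.
rewrite -{1}(card_ord n) -cardsT => /exists_subset_card[X _ /hcut].
exact: le_trans (normr_ge0 _).
Qed.

Lemma switch_bound A A' B B' :
  [disjoint A :|: A' & B :|: B'] -> #|A| = #|A'| -> #|B| = #|B'| ->
  (#|A| + #|B| <= k)%N -> (k + #|A| + #|B| <= n)%N ->
  `|(e_between e A B + e_between e A' B')%:R - (e_between e A B' + e_between e A' B)%:R|
    <= 2 * g.
Proof.
move=> dAB cA cB hk hn; set S := A :|: A' :|: (B :|: B').
have cS : (#|S| <= 2 * (#|A| + #|B|))%N.
  have := (leq_card_setU A A').1; have := (leq_card_setU B B').1.
  have := (leq_card_setU (A :|: A') (B :|: B')).1; rewrite /S -cA -cB; clear; lia.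
have [Z sZ cZ] : exists2 Z : {set 'I_n}, Z \subset ~: S & #|Z| = (k - #|A| - #|B|)%N.
  apply: exists_subset_card; have := cardsC S; rewrite card_ord; move: cS hn; clear; lia.
have dZ : [disjoint S & Z] by rewrite disjoint_sym disjoints_subset.
have := dZ; rewrite !disjointsU => /andP[/andP[dAZ dA'Z] /andP[dBZ dB'Z]].
have := dAB; rewrite !disjointsU !disjointsUr => /andP[/andP[dAB1 dAB'] /andP[dA'B dA'B']].
have cutk (V W : {set 'I_n}) : [disjoint V & W :|: Z] -> [disjoint W & Z] ->
    #|V| = #|A| -> #|W| = #|B| -> `|(cut e (V :|: (W :|: Z)))%:R - c0| <= g.
  move=> dV dW cV cW; apply: hcut.
  by rewrite !card_disjointU // cV cW cZ addnA -subnDA subnKC.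
have := cut_switch esym dAB dZ; move/(congr1 (fun m => m%:R : R)) => /=.
rewrite !(natrM, natrD).
have := cutk A B; have := cutk A' B'; have := cutk A' B; have := cutk A B'.
rewrite !disjointsUr dAB1 dAB' dA'B dA'B' dAZ dA'Z dBZ dB'Z -cA -cB.
move=> /(_ isT isT erefl erefl) + /(_ isT isT erefl erefl) + /(_ isT isT erefl erefl) +
       /(_ isT isT erefl erefl).
rewrite !ler_norml => /andP[? ?] /andP[? ?] /andP[? ?] /andP[? ?] ?.
apply/andP; split; lra.
Qed.

Definition gap P Q (w : 'I_n) : R := (deg_in e P w)%:R - (deg_in e Q w)%:R.

Lemma sum_gap P Q W :
  \sum_(w in W) gap P Q w = (e_between e P W)%:R - (e_between e Q W)%:R.
Proof.
by rewrite sumrB -!natr_sum -!e_betweenE !(e_betweenC esym W).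
Qed.

Lemma gap_ge P Q w : - (#|Q|%:R) <= gap P Q w.
Proof. by rewrite /gap ler_wpDl // lerN2 ler_nat deg_in_leq. Qed.

Lemma gap_le P Q w : gap P Q w <= #|P|%:R.
Proof. by rewrite /gap ler_wnDr ?oppr_le0 // ler_nat deg_in_leq. Qed.

Lemma gap_twin Y (N : {set 'I_n}) P Q a : N \subset Y -> P \subset N -> Q \subset Y :\: N ->
  #|P|%:R - #|symdiff N (nbhd_in e Y a)|%:R <= gap P Q a.
Proof.
move=> sNY sPN sQ.
suff : (#|P| + deg_in e Q a <= deg_in e P a + #|symdiff N (nbhd_in e Y a)|)%N.
  by rewrite /gap -(ler_nat R) !natrD; lra.
rewrite !deg_in_sum !card_sum_nat -!big_split /=; apply: leq_sum => b _.
move: (subsetP sNY b) (subsetP sPN b) (subsetP sQ b) => /implyP + /implyP + /implyP.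
by rewrite /symdiff /nbhd_in !inE;
  case: (b \in P); case: (b \in Q); case: (b \in N); case: (b \in Y); case: (e a b).
Qed.

Lemma gap_spread P Q A1 W (p t : nat) (c : R) :
  [disjoint P :|: Q & A1 :|: W] -> #|P| = p -> #|Q| = p -> #|A1| = t -> (0 < t)%N ->
  (p + t <= k)%N -> (k + p + t <= n)%N -> 0 <= c -> c <= \sum_(a in A1) gap P Q a ->
  #|W|%:R * (c - 2 * g) - t%:R * (c + 2 * g + t%:R * p%:R)
    <= t%:R * \sum_(w in W) gap P Q w.
Proof.
move=> dPQ cP cQ cA1 t_gt0 hk hn c_ge0 hc.
have g_ge0 : 0 <= g by apply: cut_dev_ge0; lia.
have hnorm : t%:R * `|c - 2 * g| <= t%:R * (c + 2 * g).
  by rewrite ler_wpM2l // ler_norml; apply/andP; split; lra.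
suff : #|W|%:R * (c - 2 * g) - t%:R * (`|c - 2 * g| + t%:R * p%:R)
         <= t%:R * \sum_(w in W) gap P Q w by lra.
apply: averaging_lb => // [w _|A sAW cA]; first by rewrite -cQ gap_ge.
have dA : [disjoint P :|: Q & A1 :|: A].
  by apply: disjointWr dPQ; rewrite setUS.
have := switch_bound dA _ _ _ _; rewrite cP cQ cA1 cA => /(_ erefl erefl hk hn).
rewrite sum_gap in hc; rewrite sum_gap ler_norml !natrD => /andP[_]; lra.
Qed.

(* Each pair spreads its gap onto the sides of the other one; adding the two bounds
   contradicts [e(P1, P2) <= p ^ 2] and [0 <= e(Q2, Q1)] when the gaps are large. *)
Lemma gapped_pairs_bound P1 Q1 P2 Q2 A1 A2 (p t : nat) (c : R) :
  [disjoint P1 :|: Q1 & A1 :|: P2] -> [disjoint P2 :|: Q2 & A2 :|: Q1] ->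
  #|P1| = p -> #|Q1| = p -> #|P2| = p -> #|Q2| = p -> #|A1| = t -> #|A2| = t ->
  (0 < t)%N -> (p + t <= k)%N -> (k + p + t <= n)%N -> 0 <= c ->
  c <= \sum_(a in A1) gap P1 Q1 a -> c <= \sum_(a in A2) gap P2 Q2 a ->
  2 * (p%:R - t%:R) * c <= t%:R * p%:R * (p%:R + 2 * t%:R) + 4 * g * (p%:R + t%:R).
Proof.
move=> d1 d2 cP1 cQ1 cP2 cQ2 cA1 cA2 t_gt0 hk hn c_ge0 h1 h2.
have := gap_spread d1 cP1 cQ1 cA1 t_gt0 hk hn c_ge0 h1.
have := gap_spread d2 cP2 cQ2 cA2 t_gt0 hk hn c_ge0 h2.
rewrite !sum_gap cP2 cQ1 (e_betweenC esym Q1 P2).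
have : (e_between e P1 P2)%:R <= p%:R * p%:R :> R.
  by rewrite -natrM ler_nat -{1}cP1 -cP2 e_between_leq.
have t_ge0 : 0 <= t%:R :> R by [].
have : 0 <= (e_between e Q2 Q1)%:R :> R by [].
nra.
Qed.

Lemma no_gapped_sides S S' Z (p t : nat) (c : R) :
  [disjoint S & S'] -> [disjoint S :|: S' & Z] -> (2 * p <= #|S|)%N -> (2 * p <= #|S'|)%N ->
  (0 < t)%N -> (p + t <= k)%N -> (k + p + t <= n)%N -> 0 <= c ->
  (forall P Q, P \subset S -> Q \subset S' -> #|P| = p -> #|Q| = p ->
     exists A : {set 'I_n}, [/\ A \subset Z, #|A| = t & c <= \sum_(a in A) gap P Q a]) ->
  2 * (p%:R - t%:R) * c <= t%:R * p%:R * (p%:R + 2 * t%:R) + 4 * g * (p%:R + t%:R).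
Proof.
move=> dSS' dZ hS hS' t_gt0 hk hn c_ge0 hA.
have [P1 [P2 [sP1 sP2 cP1 cP2 dP]]] := exists_disjoint_subsets hS.
have [Q1 [Q2 [sQ1 sQ2 cQ1 cQ2 dQ]]] := exists_disjoint_subsets hS'.
have [A1 [sA1 cA1 h1]] := hA _ _ sP1 sQ1 cP1 cQ1.
have [A2 [sA2 cA2 h2]] := hA _ _ sP2 sQ2 cP2 cQ2.
move: dZ; rewrite disjointsU => /andP[dSZ dS'Z].
have d1 : [disjoint P1 :|: Q1 & A1 :|: P2].
  rewrite disjointsU !disjointsUr dP (disjointW sP1 sA1 dSZ) (disjointW sQ1 sA1 dS'Z).
  by rewrite disjoint_sym (disjointW sP2 sQ1 dSS').
have d2 : [disjoint P2 :|: Q2 & A2 :|: Q1].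
  rewrite disjointsU !disjointsUr (disjointW sP2 sA2 dSZ) (disjointW sP2 sQ1 dSS').
  by rewrite (disjointW sQ2 sA2 dS'Z) disjoint_sym dQ.
exact: gapped_pairs_bound d1 d2 cP1 cQ1 cP2 cQ2 cA1 cA2 t_gt0 hk hn c_ge0 h1 h2.
Qed.

Lemma exists_gapped_subset P Q Y (p t : nat) :
  #|P| = p -> (0 < p)%N -> (0 < t)%N -> 17 * t%:R < #|Y|%:R :> R ->
  (8/10) * p%:R * #|Y|%:R <= \sum_(y in Y) gap P Q y ->
  exists A : {set 'I_n},
    [/\ A \subset Y, #|A| = t & (7/10) * t%:R * p%:R <= \sum_(a in A) gap P Q a].
Proof.
move=> cP p_gt0 t_gt0 hY hgap.
have [/existsP[A /and3P[sA /eqP cA hA]]|/existsPn none] :=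
  boolP [exists A : {set 'I_n}, [&& A \subset Y, #|A| == t &
                                   (7/10) * t%:R * p%:R <= \sum_(a in A) gap P Q a]].
  by exists A.
set c := (7/10) * t%:R * p%:R in none *.
have : #|Y|%:R * - c - t%:R * (`|- c| + t%:R * p%:R) <= t%:R * \sum_(y in Y) - gap P Q y.
  apply: averaging_lb => // [y _|A sA cA]; first by rewrite lerN2 -cP gap_le.
  rewrite sumrN lerN2; apply: ltW; rewrite ltNge.
  by have := none A; rewrite sA cA eqxx.
rewrite sumrN normrN ger0_norm /c; last by rewrite !mulr_ge0 // ?ler0n; lra.
have tR : 0 < t%:R :> R by rewrite ltr0n.
have pR : 0 < p%:R :> R by rewrite ltr0n.
have : 0 < t%:R * p%:R * (#|Y|%:R - 17 * t%:R) :> R by rewrite !mulr_gt0 // subr_gt0.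
have : t%:R * ((8/10) * p%:R * #|Y|%:R) <= t%:R * \sum_(y in Y) gap P Q y :> R.
  by rewrite ler_wpM2l // ltW.
nra.
Qed.

End QuasirandomCuts.

Lemma leq_double_sum (a b t : nat) : (2 * t <= a + b)%N -> (t <= a)%N \/ (t <= b)%N.
Proof. lia. Qed.

Lemma divn_eq_lt (a b d : nat) : (0 < d)%N -> (a %/ d = b %/ d)%N -> (a < b + d)%N.
Proof. by move=> d_gt0 h; rewrite (divn_eq a d) (divn_eq b d) h; have := ltn_pmod a d_gt0; lia. Qed.

(** * Degrees from one half into the other *)

Section HostPairs.
Variables (R : realType) (n : nat) (e : rel 'I_n) (k : nat) (c0 g beta : R).
Variable X : {set 'I_n}.
Hypothesis esym : symmetric e.
Hypothesis hcut : forall S : {set 'I_n}, #|S| = k -> `|(cut e S)%:R - c0| <= g.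

Local Notation Y := (~: X).
Local Notation y := (#|~: X|%:R : R).
Local Notation dY x := ((deg_in e (~: X) x)%:R : R).

Definition mid_deg := [set x in X | ((1/10) * y <= dY x) && (dY x <= (9/10) * y)].
Definition high_deg := [set x in X | (9/10) * y < dY x].
Definition low_deg := [set x in X | dY x < (1/10) * y].

Lemma mid_degP a : a \in mid_deg -> [/\ a \in X, (1/10) * y <= dY a & dY a <= (9/10) * y].
Proof. by rewrite in_set => /and3P[]. Qed.

Lemma good_pairI a a' : a \in mid_deg -> a' \in mid_deg -> `|dY a - dY a'| <= beta * n%:R ->
  (1/50) * y <= #|symdiff (nbhd_in e Y a) (nbhd_in e Y a')|%:R <= (49/50) * y ->
  good_pair beta e Y a a'.
Proof. by move=> /mid_degP[_ ? ?] /mid_degP[_ ? ?] ? /andP[? ?]. Qed.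

Definition deg_bucket (N : nat) (x : 'I_n) : 'I_N.+1 := inord (deg_in e Y x * N %/ n)%N.

Lemma deg_bucket_close N a a' : 1 <= N%:R * beta -> deg_bucket N a = deg_bucket N a' ->
  `|dY a - dY a'| <= beta * n%:R.
Proof.
move=> hN; have n_gt0 : (0 < n)%N := leq_ltn_trans (leq0n a) (ltn_ord a).
have N_gt0 : 0 < N%:R :> R by case: N hN => [|N]; rewrite ?mul0r ?ler10 ?ltr0Sn.
have bucketE x : (deg_bucket N x : nat) = (deg_in e Y x * N %/ n)%N.
  have : (deg_in e Y x <= n)%N.
    by rewrite (leq_trans (deg_in_leq _ _ _)) // (leq_trans (max_card _)) ?card_ord.
  by move=> hd; rewrite inordK // ltn_divLR //; move: hd n_gt0; clear; nia.
move=> /(congr1 (@nat_of_ord _)); rewrite !bucketE => hq.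
have := divn_eq_lt n_gt0 hq; have := divn_eq_lt n_gt0 (sym_eq hq).
rewrite -!(ltr_nat R) !natrD !natrM => h1 h2.
have hnN : n%:R <= n%:R * (N%:R * beta) :> R by rewrite ler_peMr.
rewrite ler_norml; apply/andP; split; nra.
Qed.

Lemma deg_classes : [/\ X = mid_deg :|: high_deg :|: low_deg,
  [disjoint mid_deg & high_deg] & [disjoint mid_deg :|: high_deg & low_deg]].
Proof.
split.
- apply/setP => x; rewrite !inE; case: (x \in X) => //=.
  case: (lerP ((1/10) * y) (dY x)) => h1 /=; last by rewrite orbT.
  by case: (lerP (dY x) ((9/10) * y)) => h2 //=; rewrite h2.
- rewrite disjoints_subset; apply/subsetP => x; rewrite !inE => /andP[_ /andP[_ h]].
  by rewrite negb_and -leNgt h orbT.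
- rewrite disjointsU !disjoints_subset; apply/andP; split; apply/subsetP => x;
    rewrite !inE negb_and -leNgt => /andP[_ h]; apply/orP; right.
    by case/andP: h.
  by apply: le_trans (ltW h); have : 0 <= y := ler0n _ _; lra.
Qed.

Section FindPair.
Variables (p t N : nat).
Hypotheses (t_gt0 : (0 < t)%N) (hk : (p + t <= k)%N) (hn : (k + p + t <= n)%N).
Hypotheses (hp : 20 * p%:R <= y) (hp50 : y / 50 <= p%:R) (hN : 1 <= N%:R * beta).
Hypothesis hpt : t%:R * p%:R * (p%:R + 2 * t%:R) + 4 * g * (p%:R + t%:R)
  < 2 * (p%:R - t%:R) * (t%:R * (p%:R - y / 50)).

(* If [t] vertices of [X] all see roughly the set [M] inside [Y], then every pair
   [P \subset M], [Q \subset Y :\: M] has a large gap on them. *)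
Lemma no_close_cluster (M A : {set 'I_n}) :
  M \subset Y -> (2 * p%:R : R) <= #|M|%:R <= y - 2 * p%:R -> A \subset X -> (t <= #|A|)%N ->
  {in A, forall a, #|symdiff M (nbhd_in e Y a)|%:R <= y / 50} -> False.
Proof.
move=> sMY /andP[hM1 hM2] sAX /exists_subset_card[A' sA' cA'] close.
have cYM : #|Y :\: M|%:R = y - #|M|%:R by rewrite cardsDS // natrB // subset_leq_card.
have two_p (V : {set 'I_n}) : 2 * p%:R <= #|V|%:R :> R -> (2 * p <= #|V|)%N.
  by move=> h; rewrite -(ler_nat R) natrM.
have dM : [disjoint M & Y :\: M].
  by rewrite disjoints_subset; apply/subsetP => x xM; rewrite !inE xM.
have dX : [disjoint M :|: Y :\: M & X].
  by rewrite disjoints_subset subUset sMY subsetDl.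
suff : 2 * (p%:R - t%:R) * (t%:R * (p%:R - y / 50))
         <= t%:R * p%:R * (p%:R + 2 * t%:R) + 4 * g * (p%:R + t%:R).
  by move=> h; have := lt_le_trans hpt h; rewrite ltxx.
apply: (no_gapped_sides esym hcut dM dX) => //; first exact: two_p.
- by apply: two_p; rewrite cYM; lra.
- by rewrite mulr_ge0 ?subr_ge0.
move=> P Q sPM sQ cP cQ; exists A'; split; rewrite ?(subset_trans sA') //.
rewrite -cA' mulrC; apply: sum_ge_const => a aA'.
have := @gap_twin R n e Y M P Q a sMY sPM sQ.
by have := close a (subsetP sA' a aA'); rewrite cP; lra.
Qed.

(* Inside one degree bucket, a vertex that forms no good pair with [r] sees nearly the same
   neighbourhood in [Y] as [r], or nearly its complement in [Y]. *)
Lemma find_pair (U : {set 'I_n}) : U \subset mid_deg -> (2 * t * N.+1 <= #|U|)%N ->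
  exists a a', [/\ a \in U, a' \in U, a != a' & good_pair beta e Y a a'].
Proof.
move=> sUK /(pigeonhole_fiber (deg_bucket N))[j hj].
set F := [set x in U | deg_bucket N x == j] in hj.
have sFU : F \subset U by apply/subsetP => x; rewrite inE => /andP[].
have /card_gt0P[r rF] : (0 < #|F|)%N by apply: leq_trans hj; rewrite muln_gt0.
have rK : r \in mid_deg := subsetP sUK r (subsetP sFU r rF).
have sFX : F \subset X.
  by apply/subsetP => x /(subsetP sFU) /(subsetP sUK); rewrite inE => /andP[].
set Nr := nbhd_in e Y r.
pose del a : R := #|symdiff Nr (nbhd_in e Y a)|%:R.
have [/existsP[a /and3P[aF ar hdel]]|/existsPn far] :=
  boolP [exists a, [&& a \in F, a != r & (1/50) * y <= del a <= (49/50) * y]].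
  exists r, a; split; rewrite ?(subsetP sFU) 1?eq_sym //.
  apply: good_pairI => //; first exact: subsetP sUK a (subsetP sFU a aF).
  apply: deg_bucket_close hN _.
  by move: rF aF; rewrite !inE => /andP[_ /eqP ->] /andP[_ /eqP ->].
set T := [set a in F | del a <= y / 50].
set T' := [set a in F | (49/50) * y <= del a].
have y_ge0 : 0 <= y := ler0n _ _.
have sNY : Nr \subset Y by apply/subsetP => x; rewrite inE => /andP[].
have hNr : (2 * p%:R : R) <= #|Nr|%:R <= y - 2 * p%:R.
  have [_] := mid_degP rK; rewrite /deg_in -/Nr => h1 h2.
  (* [lra] ignores section hypotheses, hence the [move: hp]. *)
  have p_small : 2 * p%:R <= (1/10) * (#|Y|%:R : R) by move: hp; lra.
  by apply/andP; split; lra.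
have sTF : T \subset F by apply/subsetP => a; rewrite in_set => /andP[].
have sT'F : T' \subset F by apply/subsetP => a; rewrite in_set => /andP[].
have [tT|tT'] : (t <= #|T|)%N \/ (t <= #|T'|)%N.
  apply: leq_double_sum; apply: leq_trans hj (leq_trans _ (leq_card_setU T T').1).
  apply: subset_leq_card.
  apply/subsetP => a aF; have := aF; rewrite in_set => /andP[aU aj].
  rewrite /T /T' in_setU !in_set aU aj /=.
  have [->|ar] := eqVneq a r; first by rewrite /del /symdiff setDv setU0 cards0; lra.
  have := far a; rewrite aF ar /= negb_and -!ltNge => /orP[] h; apply/orP; [left|right]; lra.
- case: (no_close_cluster sNY hNr (subset_trans sTF sFX) tT) => a.
  by rewrite in_set => /andP[].
- case: (no_close_cluster (subsetDl Y Nr) _ (subset_trans sT'F sFX) tT') => [|a].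
    by rewrite cardsDS // natrB ?subset_leq_card //; lra.
  rewrite in_set => /andP[_ ha].
  have sNaY : nbhd_in e Y a \subset Y by apply/subsetP => x; rewrite inE => /andP[].
  have sDY : symdiff Nr (nbhd_in e Y a) \subset Y.
    by rewrite subUset !(subset_trans (subsetDl _ _)).
  by rewrite card_symdiff_setDl // natrB ?subset_leq_card //; lra.
Qed.

End FindPair.

Lemma high_degP a : a \in high_deg -> a \in X /\ (9/10) * y < dY a.
Proof. by rewrite in_set => /andP[]. Qed.

Lemma low_degP a : a \in low_deg -> a \in X /\ dY a < (1/10) * y.
Proof. by rewrite in_set => /andP[]. Qed.

Section CountMid.
Variables (q t : nat).
Hypotheses (q_gt0 : (0 < q)%N) (t_gt0 : (0 < t)%N) (ht : 17 * t%:R < y).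
Hypotheses (hk : (q + t <= k)%N) (hn : (k + q + t <= n)%N).
Hypothesis hqt : t%:R * q%:R * (q%:R + 2 * t%:R) + 4 * g * (q%:R + t%:R)
  < 2 * (q%:R - t%:R) * ((7/10) * t%:R * q%:R).

(* Many high-degree and many low-degree vertices would give two strongly gapped pairs. *)
Lemma few_high_or_low : (#|high_deg| < 2 * q)%N || (#|low_deg| < 2 * q)%N.
Proof.
rewrite !ltnNge -negb_and; apply/negP => /andP[hH hL].
have dHL : [disjoint high_deg & low_deg].
  rewrite disjoints_subset; apply/subsetP => x /high_degP[_ h].
  by rewrite inE; apply/negP => /low_degP[_]; have : 0 <= y := ler0n _ _; lra.
have dHLY : [disjoint high_deg :|: low_deg & Y].
  rewrite disjoints_subset setCK subUset; apply/andP; split; apply/subsetP => x.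
    by case/high_degP.
  by case/low_degP.
suff : 2 * (q%:R - t%:R) * ((7/10) * t%:R * q%:R)
         <= t%:R * q%:R * (q%:R + 2 * t%:R) + 4 * g * (q%:R + t%:R).
  by move=> h; have := lt_le_trans hqt h; rewrite ltxx.
apply: (no_gapped_sides esym hcut dHL dHLY) => //; first by rewrite !mulr_ge0 //; lra.
move=> P Q sP sQ cP cQ.
have hP : (9/10) * y * q%:R <= \sum_(x in P) dY x.
  by rewrite -cP; apply: sum_ge_const => x /(subsetP sP) /high_degP[_ /ltW].
have hQ : \sum_(x in Q) dY x <= (1/10) * y * q%:R.
  by rewrite -cQ; apply: sum_le_const => x /(subsetP sQ) /low_degP[_ /ltW].
apply: exists_gapped_subset cP q_gt0 t_gt0 ht _.
by rewrite (sum_gap R esym) !e_betweenE !natr_sum; lra.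
Qed.

Hypotheses (cX : #|X| = k) (hc0 : c0 = (1/2) * k%:R * y).

Lemma mid_deg_lb : (4/9) * y * k%:R - 3 * y * q%:R - 2 * g <= y * #|mid_deg|%:R.
Proof.
have [defX dMH dMHL] := deg_classes.
have g_ge0 : 0 <= g by apply: (cut_dev_ge0 hcut); lia.
have y_ge0 : 0 <= y := ler0n _ _.
have cXs : k = (#|mid_deg| + #|high_deg| + #|low_deg|)%N.
  by rewrite -cX {1}defX !card_disjointU.
have hk' : y * k%:R = y * #|mid_deg|%:R + y * #|high_deg|%:R + y * #|low_deg|%:R.
  by rewrite cXs !natrD; ring.
have := hcut cX; rewrite /cut e_betweenE natr_sum {1}defX.
rewrite !big_disjointU // hc0 ler_norml => /andP[lo hi].
have Mlo : (1/10) * y * #|mid_deg|%:R <= \sum_(x in mid_deg) dY x.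
  by apply: sum_ge_const => x /mid_degP[].
have Mhi : \sum_(x in mid_deg) dY x <= (9/10) * y * #|mid_deg|%:R.
  by apply: sum_le_const => x /mid_degP[].
have Hlo : (9/10) * y * #|high_deg|%:R <= \sum_(x in high_deg) dY x.
  by apply: sum_ge_const => x /high_degP[_ /ltW].
have Hhi : \sum_(x in high_deg) dY x <= y * #|high_deg|%:R.
  by apply: sum_le_const => x _; rewrite ler_nat deg_in_leq.
have Llo : 0 <= \sum_(x in low_deg) dY x by apply: sumr_ge0.
have Lhi : \sum_(x in low_deg) dY x <= (1/10) * y * #|low_deg|%:R.
  by apply: sum_le_const => x /low_degP[_ /ltW].
have qy : 0 <= y * q%:R by rewrite mulr_ge0.
have ky : 0 <= y * k%:R by rewrite mulr_ge0.
case/orP: few_high_or_low => /ltnW; rewrite -(ler_nat R) natrM => few.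
- have : y * #|high_deg|%:R <= y * (2 * q%:R) by rewrite ler_wpM2l.
  nra.
- have : y * #|low_deg|%:R <= y * (2 * q%:R) by rewrite ler_wpM2l.
  nra.
Qed.

End CountMid.

End HostPairs.

(** * Choice of parameters *)

(* Constants are written as products such as [40 * 100]: numerals are unary [nat]s and
   large ones make [lra] very slow. *)
Lemma pair_gap_bound (R : realFieldType) (n t g p y : R) :
  1 <= t -> (40 * 100) * t <= n -> 0 <= g -> (80 * 100) * g < t * n -> n <= 2 * y ->
  20 * p <= y < 20 * p + 20 ->
  t * p * (p + 2 * t) + 4 * g * (p + t) < 2 * (p - t) * (t * (p - y / 50)).
Proof.
move=> ht htn hg hgt hny /andP[hp1 hp2].
have key : p * (p + 2 * t) + (p + 1) * (p + t) / 50 <= 2 * (p - t) * (p - y / 50).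
  have : 0 <= (p - t) * (20 * p + 20 - y) by apply: mulr_ge0; lra.
  have : 0 <= p * (p + 1 - 100 * t) by apply: mulr_ge0; lra.
  have : 0 <= p * (p - 99) by apply: mulr_ge0; lra.
  lra.
have : 0 < (t * n - (80 * 100) * g) * (p + t) by apply: mulr_gt0; lra.
have : 0 <= t * (p + t) * ((p + 1) / 50 - n / (20 * 100)) by rewrite !mulr_ge0 //; lra.
have : 0 <= t * (2 * (p - t) * (p - y / 50) - (p * (p + 2 * t) + (p + 1) * (p + t) / 50)).
  by apply: mulr_ge0; lra.
lra.
Qed.

Lemma high_low_bound (R : realFieldType) (n t g q : R) :
  1 <= t -> (40 * 100) * t <= n -> 0 <= g -> (80 * 100) * g < t * n ->
  100 * q <= n < 100 * q + 100 ->
  t * q * (q + 2 * t) + 4 * g * (q + t) < 2 * (q - t) * ((7/10) * t * q).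
Proof.
move=> ht htn hg hgt /andP[hq1 hq2].
have key : q * (q + 2 * t) + (q + 1) * (q + t) / 20 <= 2 * (q - t) * ((7/10) * q).
  have : 0 <= q * (q + 1 - 40 * t) by apply: mulr_ge0; lra.
  have : 0 <= q * (q - 39) by apply: mulr_ge0; lra.
  lra.
have : 0 < (t * n - (80 * 100) * g) * (q + t) by apply: mulr_gt0; lra.
have : 0 <= t * (q + t) * ((q + 1) / 20 - n / (20 * 100)) by rewrite !mulr_ge0 //; lra.
have : 0 <= t * (2 * (q - t) * ((7/10) * q) - (q * (q + 2 * t) + (q + 1) * (q + t) / 20)).
  by apply: mulr_ge0; lra.
lra.
Qed.

Lemma mid_count_bound (R : realFieldType) (n t N g k q m : R) :
  1 <= N -> 1 <= t -> (40 * 100) * N * t <= n -> 0 <= g -> (80 * 100) * g < t * n ->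
  n - 1 <= 2 * k <= n -> 100 * q <= n -> 20 * m <= n + 19 ->
  (n - k) * (2 * t * (N + 1) + 2 * m) <= (4/9) * (n - k) * k - 3 * (n - k) * q - 2 * g.
Proof.
move=> hN ht hnt hg hgt /andP[hk1 hk2] hq hm.
have : 0 <= (N - 1) * t by apply: mulr_ge0; lra.
move=> htN; have htn : (40 * 100) * t <= n by lra.
have : 0 <= (n - (40 * 100) * t) * n by apply: mulr_ge0; lra.
move=> hn; have hgn : (80 * 100) * g * (40 * 100) <= n * n by lra.
have : 0 <= (n - k) * ((4/9) * k - 3 * q - n / 100 - (2 * t * (N + 1) + 2 * m)).
  by apply: mulr_ge0; lra.
have : 0 <= (n - k - n / 2) * n by apply: mulr_ge0; lra.
lra.
Qed.

Lemma divn_boundsR (R : numDomainType) (a d : nat) : (0 < d)%N ->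
  (d%:R * (a %/ d)%N%:R : R) <= a%:R < (d%:R * (a %/ d)%N%:R + d%:R : R).
Proof.
move=> d_gt0; rewrite -natrM -natrD ler_nat ltr_nat mulnC leq_divM /=.
by rewrite addnC -mulSn ltn_ceil.
Qed.

Lemma half_boundsR (R : numDomainType) (n : nat) : (n%:R - 1 : R) <= 2 * n./2%:R <= (n%:R : R).
Proof.
have := odd_double_half n; move/(congr1 (fun m => m%:R : R)) => /=.
rewrite natrD -mul2n natrM => <-; case: (odd n) => /=; rewrite ?add0r ?lexx ?andbT.
  by rewrite addrAC subrr add0r lexx lerDr ler01.
by rewrite lerBlDr lerDl ler01.
Qed.

Lemma host_good_of_mid_pairs (R : realType) (beta : R) (n L : nat) (e : rel 'I_n)
    (X : {set 'I_n}) :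
  #|X| = n./2 ->
  (forall U : {set 'I_n}, U \subset mid_deg R e X -> (L <= #|U|)%N ->
     exists a a', [/\ a \in U, a' \in U, a != a' & good_pair beta e (~: X) a a']) ->
  (L + 2 * m_of n <= #|mid_deg R e X|)%N ->
  host_good beta e.
Proof.
move=> cX hfind /(greedy_pairs hfind)[x [x' [inj inK good]]].
exists X, x, x'; split => // i.
by have [/mid_degP[? _ _] /mid_degP[? _ _]] := inK i.
Qed.

Lemma exists_half_cut (R : realType) (n : nat) (e : rel 'I_n) (g : R) :
  (forall X : {set 'I_n}, #|X| = n./2 ->
     `|(e_between e X (~: X))%:R - (1/2) * #|X|%:R * #|~: X|%:R| <= g) ->
  exists2 X : {set 'I_n}, #|X| = n./2 &
    forall S : {set 'I_n}, #|S| = n./2 -> `|(cut e S)%:R - (1/2) * n./2%:R * #|~: X|%:R| <= g.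
Proof.
move=> hdev; have cC (S : {set 'I_n}) : #|~: S| = (n - #|S|)%N by rewrite cardsCs setCK card_ord.
have [X _ cX] : exists2 X : {set 'I_n}, X \subset setT & #|X| = n./2.
  by apply: exists_subset_card; rewrite cardsT card_ord leq_half_double -addnn leqW // leq_addr.
by exists X => // S cS; have := hdev S cS; rewrite !cC cS cX.
Qed.

Lemma host_good_of_cut_deviation (R : realType) (beta g : R) (n N t : nat) (e : rel 'I_n) :
  symmetric e -> 1 <= N%:R * beta -> (0 < t)%N -> (40 * 100 * N * t <= n)%N ->
  (80 * 100) * g < t%:R * n%:R ->
  (forall X : {set 'I_n}, #|X| = n./2 ->
     `|(e_between e X (~: X))%:R - (1/2) * #|X|%:R * #|~: X|%:R| <= g) ->
  host_good beta e.
Proof.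
move=> esym hN t_gt0 hnt hgt /exists_half_cut[X cX hcut].
have N_gt0 : (0 < N)%N.
  by rewrite lt0n; apply/eqP => N0; move: hN; rewrite N0 mul0r ler10.
have htn : (40 * 100 * t <= n)%N by move: hnt N_gt0; clear; nia.
set k := n./2 in cX hcut.
have kn : (k <= n)%N by rewrite -cX (leq_trans (max_card _)) ?card_ord.
have g_ge0 : 0 <= g := cut_dev_ge0 hcut kn.
have yE : #|~: X|%:R = n%:R - k%:R :> R by rewrite cardsCs setCK card_ord cX natrB.
set p := (#|~: X| %/ 20)%N; set q := (n %/ 100)%N.
have hp := divn_boundsR R #|~: X| (isT : (0 < 20)%N); rewrite -/p in hp.
have hq := divn_boundsR R n (isT : (0 < 100)%N); rewrite -/q in hq.
have hm : 20 * (m_of n)%:R <= n%:R + 19 :> R.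
  by have /andP[+ _] := divn_boundsR R (n + 19) (isT : (0 < 20)%N); rewrite natrD.
have hk := half_boundsR R n; rewrite -/k in hk.
have ht1 : 1 <= t%:R :> R by rewrite ler1n.
have htnR : (40 * 100) * t%:R <= n%:R :> R by rewrite -!natrM ler_nat.
have hNt : (40 * 100) * N%:R * t%:R <= n%:R :> R by rewrite -!natrM ler_nat.
have hN1 : 1 <= N%:R :> R by rewrite ler1n.
have /andP[hp1 hp2] := hp; have /andP[hq1 hq2] := hq; have /andP[hk1 hk2] := hk.
have nat_le (a b : nat) : a%:R <= b%:R :> R -> (a <= b)%N by rewrite ler_nat.
have hpk : (p + t <= k)%N by apply: nat_le; rewrite natrD; lra.
have hpn : (k + p + t <= n)%N by apply: nat_le; rewrite !natrD; lra.
have hqk : (q + t <= k)%N by apply: nat_le; rewrite natrD; lra.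
have hqn : (k + q + t <= n)%N by apply: nat_le; rewrite !natrD; lra.
have q_gt0 : (0 < q)%N by rewrite -(ltr_nat R); lra.
have hp50 : #|~: X|%:R / 50 <= p%:R :> R by lra.
have ht17 : 17 * t%:R < #|~: X|%:R :> R by lra.
have hny : n%:R <= 2 * #|~: X|%:R :> R by lra.
have hfind := find_pair esym hcut t_gt0 hpk hpn hp1 hp50 hN
  (pair_gap_bound ht1 htnR g_ge0 hgt hny hp).
have hmid := mid_deg_lb esym hcut q_gt0 t_gt0 ht17 hqk hqn
  (high_low_bound ht1 htnR g_ge0 hgt hq) cX erefl.
apply: (host_good_of_mid_pairs cX hfind); apply: nat_le.
have := mid_count_bound hN1 ht1 hNt g_ge0 hgt hk hq1 hm.
rewrite -yE -addn1 !natrD !natrM => /le_trans /(_ hmid).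
by rewrite ler_pM2l //; lra.
Qed.

Theorem lemma2p13 (R : realType) (beta : R) :
  0 < beta ->
  exists gamma : R, 0 < gamma /\
  exists n0 : nat, forall n : nat, (n0 <= n)%N ->
  forall e : rel 'I_n, symmetric e -> irreflexive e ->
  (forall X : {set 'I_n}, #|X| = n./2 ->
     `|(e_between e X (~: X))%:R - (1/2) * #|X|%:R * #|~: X|%:R| <= gamma * (n%:R) ^+ 2) ->
  host_good beta e.
Proof.
move=> beta_gt0.
have [N hN] : exists N : nat, 1 <= N%:R * beta.
  have ibeta_gt0 : 0 < beta^-1 by rewrite invr_gt0.
  exists (Num.Def.archi_bound beta^-1); apply: ltW.
  rewrite -(ltr_pM2r ibeta_gt0) mul1r -mulrA divff ?mulr1 ?gt_eqF //.
  exact/archi_boundP/ltW.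
have N_gt0 : (0 < N)%N by rewrite lt0n; apply/eqP => N0; move: hN; rewrite N0 mul0r ler10.
pose T0 := (40 * 100 * N)%N; have T0_gt0 : (0 < T0)%N by rewrite !muln_gt0.
pose K : R := (800 * 100) * T0%:R; have K_gt0 : 0 < K by rewrite /K !mulr_gt0 // ltr0n.
exists K^-1; split; first by rewrite invr_gt0.
exists (2 * T0)%N; move=> n hn e esym _ hdev.
have T0n : (T0 <= n)%N by apply: leq_trans hn; rewrite leq_pmull.
have n_gt0 : (0 < n)%N := leq_trans T0_gt0 T0n.
have t_gt0 : (0 < n %/ T0)%N by rewrite divn_gt0.
apply: (host_good_of_cut_deviation esym hN t_gt0 _ _ hdev); first by rewrite mulnC leq_divM.
have : (n < 2 * (n %/ T0) * T0)%N.
  by rewrite (leq_trans (ltn_ceil n T0_gt0)) // leq_mul2r mul2n -addnn -addn1 leq_add2l t_gt0 orbT.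
rewrite -(ltr_nat R) 2!natrM => hnT; rewrite mulrCA ltr_pdivrMl // /K.
have : 0 < n%:R * (2 * (n %/ T0)%:R * T0%:R - n%:R) :> R.
  by apply: mulr_gt0; rewrite ?subr_gt0 ?ltr0n.
rewrite expr2; nra.
Qed.
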